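(* Let $W\in\mathbb{S}^n_+$, $K\in\mathbb{R}^{m\times n}$, $R_1\in\mathbb{S}^{n_1}_+,\dots,R_q\in\mathbb{S}^{n_q}_+$, $S\in\mathbb{D}^m_+$, $\sigma_1,\dots,\sigma_q>0$, and $Z,J\in\mathbb{R}^{m\times n}$. Let $R(\tau):=\bigoplus_{j=1}^q e^{\sigma_j\tau_j}R_j$ for $\tau\in\mathbb{R}^q$, $\Sigma:=\bigoplus_{j=1}^q\sigma_j\mathbf{I}_{n_j}$, and $\widehat R:=\bigoplus_{i=1}^q R_i$. Then $$\begin{bmatrix}\operatorname{He}((A+BK)W) & -BK & BS-WK^{\mathsf T}-Z^{\mathsf T}\\ \star & \operatorname{He}(R(\tau)A)-\Sigma R(\tau) & K^{\mathsf T}-J^{\mathsf T}\\ \star&\star&-2S\end{bmatrix}\prec 0\quad\text{for all }\tau\in\mathcal{T}$$ holds if and only if, for all $\Psi\in\mathcal{Z}:=\left\{\bigoplus_{i=1}^q\psi_i\mathbf{I}_{n_i}:\ \psi_i\in\{1,e^{\sigma_iT_2^{(i)}}\}\right\}$, $$\mathfrak{N}(\Psi):=\begin{bmatrix}\operatorname{He}((A+BK)W) & -BK & BS-WK^{\mathsf T}-Z^{\mathsf T}\\ \star & \operatorname{He}(\widehat R\Psi A)-\Sigma\widehat R\Psi & K^{\mathsf T}-J^{\mathsf T}\\ \star&\star&-2S\end{bmatrix}\prec 0.$$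
   Context: Fix integers $n,m\ge1$, $1\le q\le n$, $n_1,\dots,n_q\ge1$ with $n_1+\dots+n_q=n$; $A\in\mathbb{R}^{n\times n}$, $B\in\mathbb{R}^{n\times m}$; positive reals $T_2^{(1)},\dots,T_2^{(q)}$, and $\mathcal{T}=[0,T_2^{(1)}]\times\dots\times[0,T_2^{(q)}]$. Notation: $\mathbb{S}^k_+$ symmetric positive definite $k\times k$ matrices; $\mathbb{D}^m_+$ diagonal positive definite $m\times m$ matrices; $\operatorname{He}(M)=M+M^{\mathsf T}$; $\bigoplus$ block-diagonal direct sum; $\star$ symmetric blocks. *)

From HB Require Import structures.
From mathcomp Require Import all_boot all_order all_algebra.
From mathcomp Require Import all_classical all_reals all_analysis.
Set Implicit Arguments. Unset Strict Implicit. Unset Printing Implicit Defensive.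
Import Order.TTheory GRing.Theory Num.Theory.
Local Open Scope ring_scope.

Definition He (R : ringType) (k : nat) (M : 'M[R]_k) : 'M[R]_k := M + M^T.

Definition posdef (R : numDomainType) (k : nat) (M : 'M[R]_k) : Prop :=
  M^T = M /\ forall x : 'cV[R]_k, x != 0 -> 0 < (x^T *m M *m x) 0 0.

Definition negdef (R : numDomainType) (k : nat) (M : 'M[R]_k) : Prop :=
  posdef (- M).

Definition posdiag (R : numDomainType) (k : nat) (M : 'M[R]_k) : Prop :=
  is_diag_mx M /\ forall i, 0 < M i i.

(* symmetric 3x3 block matrix [A11 A12 A13; * A22 A23; * * A33] *)
Definition sym3 (R : ringType) (a b c : nat)
  (A11 : 'M[R]_a) (A12 : 'M[R]_(a, b)) (A13 : 'M[R]_(a, c))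
  (A22 : 'M[R]_b) (A23 : 'M[R]_(b, c)) (A33 : 'M[R]_c) : 'M[R]_(a + (b + c)) :=
  block_mx A11 (row_mx A12 A13) (col_mx A12^T A13^T) (block_mx A22 A23 A23^T A33).

From HB Require Import structures.
From mathcomp Require Import all_boot all_order all_algebra.
From mathcomp Require Import all_classical all_reals all_analysis.
From mathcomp Require Import ring.
Import Order.TTheory GRing.Theory Num.Theory.
Local Open Scope ring_scope.

(* The matrix depends affinely on the block-diagonal weight R(tau), whose j-th
   block is R_j scaled by e^(sigma_j tau_j); for tau in T these scalars lie in
   the box [1, e^(sigma_j T_2^(j))].  Negative definiteness is a convex
   condition, and a convex set containing all vertices of a box contains the
   whole box; the vertices give exactly the weights R_hat Psi with Psi in Z.
   The other direction takes tau_j in {0, T_2^(j)}. *)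

Lemma mul_mxdiag (R : pzSemiRingType) p (p_ : 'I_p -> nat)
    (D E : forall i, 'M[R]_(p_ i)) :
  \mxdiag_i D i *m \mxdiag_i E i = \mxdiag_i (D i *m E i).
Proof.
rewrite {2}/mxdiag mul_mxdiag_mxblock /mxdiag; apply/eq_mxblock => i j.
by case: eqP => [<-|_]; rewrite ?conform_mx_id ?mulmx0.
Qed.

Lemma scale_mxdiag (R : comPzRingType) p (p_ : 'I_p -> nat) a
    (D : forall i, 'M[R]_(p_ i)) :
  a *: \mxdiag_i D i = \mxdiag_i (a *: D i).
Proof.
rewrite -mul_scalar_mx -mxdiagZ mul_mxdiag; apply: eq_mxdiag => i.
by rewrite mul_scalar_mx.
Qed.

Lemma mxdiag_scale_comb (R : comPzRingType) p (p_ : 'I_p -> nat) (a b : R)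
    (c1 c2 : 'I_p -> R) (D : forall i, 'M[R]_(p_ i)) :
  \mxdiag_i ((a * c1 i + b * c2 i) *: D i) =
  a *: \mxdiag_i (c1 i *: D i) + b *: \mxdiag_i (c2 i *: D i).
Proof.
rewrite !scale_mxdiag -mxdiagD; apply: eq_mxdiag => i.
by rewrite !scalerA scalerDl.
Qed.

Lemma convex_box_vertices (R : realFieldType) q (lo hi : 'I_q -> R)
    (P : ('I_q -> R) -> Prop) :
  (forall c1 c2 t, 0 <= t <= 1 -> P c1 -> P c2 ->
     P (fun i => (1 - t) * c1 i + t * c2 i)) ->
  (forall c, (forall j, c j = lo j \/ c j = hi j) -> P c) ->
  forall c, (forall j, lo j <= c j <= hi j) -> P c.
Proof.
move=> Pconvex Pvertex.
suff Pk k c : (forall j, lo j <= c j <= hi j) ->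
    (forall j : 'I_q, (k <= j)%N -> c j = lo j \/ c j = hi j) -> P c.
  by move=> c c_box; apply: (Pk q) => // j; rewrite leqNgt ltn_ord.
elim: k c => [|k IHk] c c_box c_vert; first by apply: Pvertex => j; apply: c_vert.
have [kq | qk] := ltnP k q; last first.
  apply: IHk => // j kj.
  by move: (leq_trans (ltn_ord j) qk); rewrite ltnNge kj.
pose j := Ordinal kq; pose c_at v := [eta c with j |-> v].
have /andP[lo_c c_hi] := c_box j.
have P_at v : v = lo j \/ v = hi j -> P (c_at v).
  move=> v_end; apply: IHk => i /=; case: eqP => [-> | /eqP ij]; rewrite ?c_box //.
  - by case: v_end => ->; rewrite lexx ?(le_trans lo_c c_hi).
  - move=> ki; apply: c_vert; rewrite ltn_neqAle ki andbT.
    by apply: contra ij => /eqP ki_eq; apply/eqP/val_inj.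
have [c_lo | c_nlo] := eqVneq (c j) (lo j).
  have -> : c = c_at (lo j) by apply: funext => i /=; case: eqP => [->|].
  by apply: P_at; left.
have lo_hi : 0 < hi j - lo j.
  by rewrite subr_gt0 (lt_le_trans _ c_hi) // lt_neqAle eq_sym c_nlo.
pose t := (c j - lo j) / (hi j - lo j).
have -> : c = fun i => (1 - t) * c_at (lo j) i + t * c_at (hi j) i.
  apply: funext => i /=; case: eqP => [->|_]; last by ring.
  by rewrite /t; field; rewrite gt_eqF.
apply: Pconvex; [|by apply: P_at; left|by apply: P_at; right].
rewrite divr_ge0 ?subr_ge0 ?(le_trans lo_c c_hi) //=.
by rewrite ler_pdivrMr // mul1r lerD2r.
Qed.

Lemma convex_comb_gt0 (R : realDomainType) (t u v : R) :
  0 <= t <= 1 -> 0 < u -> 0 < v -> 0 < (1 - t) * u + t * v.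
Proof.
move=> /andP[t_ge0 t_le1] u_gt0 v_gt0; have [t_lt1 | t_ge1] := ltrP t 1.
  by rewrite (ltr_wpDr (mulr_ge0 t_ge0 (ltW v_gt0))) // mulr_gt0 // subr_gt0.
have -> : t = 1 by apply/le_anti; rewrite t_le1 t_ge1.
by rewrite subrr mul0r add0r mul1r.
Qed.

Lemma posdef_convex (R : realDomainType) k (M1 M2 : 'M[R]_k) t :
  0 <= t <= 1 -> posdef M1 -> posdef M2 -> posdef ((1 - t) *: M1 + t *: M2).
Proof.
move=> t01 [M1_sym M1_pos] [M2_sym M2_pos]; split.
  by rewrite linearD !linearZ /= M1_sym M2_sym.
move=> x /[dup] /M1_pos + /M2_pos.
rewrite mulmxDr mulmxDl -!scalemxAr -!scalemxAl !mxE; exact: convex_comb_gt0.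
Qed.

Lemma negdef_convex (R : realDomainType) k (M1 M2 : 'M[R]_k) t :
  0 <= t <= 1 -> negdef M1 -> negdef M2 -> negdef ((1 - t) *: M1 + t *: M2).
Proof. by rewrite /negdef opprD -!scalerN; exact: posdef_convex. Qed.

Lemma sym3_middle_comb (R : comNzRingType) (n1 n2 n3 : nat) (t : R)
    (A11 : 'M[R]_n1) (A12 : 'M[R]_(n1, n2)) (A13 : 'M[R]_(n1, n3))
    (X1 X2 : 'M[R]_n2) (A23 : 'M[R]_(n2, n3)) (A33 : 'M[R]_n3) :
  sym3 A11 A12 A13 ((1 - t) *: X1 + t *: X2) A23 A33 =
  (1 - t) *: sym3 A11 A12 A13 X1 A23 A33 + t *: sym3 A11 A12 A13 X2 A23 A33.
Proof.
rewrite /sym3 !scale_block_mx !scale_row_mx !scale_col_mx.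
by rewrite !add_block_mx !add_row_mx !add_col_mx -!scalerDl subrK !scale1r.
Qed.

Lemma He_mul_sub_comb (R : comNzRingType) k (A Sig D1 D2 : 'M[R]_k) (a b : R) :
  He ((a *: D1 + b *: D2) *m A) - Sig *m (a *: D1 + b *: D2) =
  a *: (He (D1 *m A) - Sig *m D1) + b *: (He (D2 *m A) - Sig *m D2).
Proof.
rewrite /He mulmxDl mulmxDr -!scalemxAl -!scalemxAr !linearD !linearZ /=.
by apply/matrixP => i j; rewrite !mxE; ring.
Qed.

Theorem proposition1 (R : realType) (q m : nat) (nn : 'I_q -> nat)
  (A : 'M[R]_(\sum_(j < q) nn j)) (B : 'M[R]_(\sum_(j < q) nn j, m))
  (T2 : 'I_q -> R) (sigma : 'I_q -> R)
  (W : 'M[R]_(\sum_(j < q) nn j)) (K : 'M[R]_(m, \sum_(j < q) nn j))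
  (Rb : forall j : 'I_q, 'M[R]_(nn j)) (S : 'M[R]_m)
  (Z J : 'M[R]_(m, \sum_(j < q) nn j)) :
  (0 < q)%N -> (0 < m)%N -> (forall j, (0 < nn j)%N) ->
  (forall j, 0 < T2 j) ->
  posdef W -> (forall j, posdef (Rb j)) -> posdiag S ->
  (forall j, 0 < sigma j) ->
  let Sig := \mxdiag_(j < q) ((sigma j)%:M : 'M[R]_(nn j)) in
  let Rtau (tau : 'I_q -> R) := \mxdiag_(j < q) (expR (sigma j * tau j) *: Rb j) in
  let Rhat := \mxdiag_(j < q) Rb j in
  (forall tau : 'I_q -> R, (forall j, 0 <= tau j <= T2 j) ->
     negdef (sym3 (He ((A + B *m K) *m W)) (- (B *m K))
                  (B *m S - W *m K^T - Z^T)
                  (He (Rtau tau *m A) - Sig *m Rtau tau) (K^T - J^T)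
                  (- (2%:R *: S))))
  <->
  (forall psi : 'I_q -> R,
     (forall j, psi j = 1 \/ psi j = expR (sigma j * T2 j)) ->
     let Psi := \mxdiag_(j < q) ((psi j)%:M : 'M[R]_(nn j)) in
     negdef (sym3 (He ((A + B *m K) *m W)) (- (B *m K))
                  (B *m S - W *m K^T - Z^T)
                  (He (Rhat *m Psi *m A) - Sig *m Rhat *m Psi) (K^T - J^T)
                  (- (2%:R *: S)))).
Proof.
move=> _ _ _ T2_gt0 _ _ _ sigma_gt0 Sig Rtau Rhat.
pose N D := sym3 (He ((A + B *m K) *m W)) (- (B *m K)) (B *m S - W *m K^T - Z^T)
              (He (D *m A) - Sig *m D) (K^T - J^T) (- (2%:R *: S)).
pose Rw (c : 'I_q -> R) := \mxdiag_(j < q) (c j *: Rb j).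
have RhatPsi psi : Rhat *m \mxdiag_(j < q) ((psi j)%:M : 'M[R]_(nn j)) = Rw psi.
  by rewrite mul_mxdiag; apply: eq_mxdiag => j; rewrite mul_mx_scalar.
split=> [N_box psi psi_vert Psi | N_vert tau tau_box].
  rewrite -[Sig *m Rhat *m Psi]mulmxA /Psi RhatPsi.
  pose tau j := if psi j == 1 then 0 else T2 j.
  have -> : Rw psi = Rtau tau.
    apply: eq_mxdiag => j; rewrite /tau.
    by case: eqP => [->|]; [rewrite mulr0 expR0 | case: (psi_vert j) => ->].
  by apply: N_box => j; rewrite /tau; case: eqP; rewrite lexx ltW.
change (negdef (N (Rw (fun j => expR (sigma j * tau j))))).
apply: (@convex_box_vertices _ _ (fun=> 1) (fun j => expR (sigma j * T2 j))
         (fun c => negdef (N (Rw c)))).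
- move=> c1 c2 t t01 N1 N2 /=.
  have N_comb : N ((1 - t) *: Rw c1 + t *: Rw c2) =
                (1 - t) *: N (Rw c1) + t *: N (Rw c2).
    by rewrite /N He_mul_sub_comb sym3_middle_comb.
  rewrite /Rw mxdiag_scale_comb -/(Rw c1) -/(Rw c2) N_comb.
  exact: negdef_convex t01 N1 N2.
- move=> c /N_vert /=.
  by rewrite -[Sig *m Rhat *m _]mulmxA RhatPsi.
- move=> j; have /andP[tau_ge0 tau_le] := tau_box j.
  by rewrite -expR0 !ler_expR mulr_ge0 ?(ltW (sigma_gt0 j)) //= ler_pM2l.
Qed.
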